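(* There exist constants $c>0$ and $n_0$ with the following property. For any integer $n\ge n_0$, any integer $B\ge1$, any $\eta\in(0,1/2)$ and any $\epsilon\in(0,1)$, there exist a sequence of $n\times n$ matrices $(A(k))_{k\ge0}$ and an initial vector $x(0)\in\mathbb{R}^n$ such that: each $A(k)$ is doubly stochastic with positive diagonal entries and all its positive entries are at least $\eta$; for every integer $k\ge0$ the directed graph $(N,\mathcal{E}(A(kB))\cup\cdots\cup\mathcal{E}(A((k+1)B-1)))$ is strongly connected; and, with $x(k+1)=A(k)x(k)$, whenever $V(x(k))/V(x(0))\le\epsilon$ we have \[k\ge c\,\frac{n^2}{\eta}\,B\log\frac1\epsilon.\]
   Context: $N=\{1,\dots,n\}$. A matrix is doubly stochastic if it is nonnegative with all row and column sums equal to $1$. For a matrix $A=[a_{ij}]$, $\mathcal{E}(A)$ is the set of directed edges $(j,i)$ (including self-edges) with $a_{ij}>0$. For $x\in\mathbb{R}^n$, $\bar x=\frac1n\sum_ix_i$ and $V(x)=\sum_i(x_i-\bar x)^2$. *)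

From HB Require Import structures.
From mathcomp Require Import all_boot all_order all_algebra.
From mathcomp Require Import Rstruct.
From Stdlib Require Rdefinitions Rpower.
Set Implicit Arguments. Unset Strict Implicit. Unset Printing Implicit Defensive.
Import Order.TTheory GRing.Theory Num.Theory.
Local Open Scope ring_scope.

Notation R := Rdefinitions.R.

Definition doubly_stochastic (n : nat) (A : 'M[R]_n) : Prop :=
  (forall i j, 0 <= A i j) /\
  (forall i, \sum_(j < n) A i j = 1) /\
  (forall j, \sum_(i < n) A i j = 1).

Definition edge_of (n : nat) (A : 'M[R]_n) : rel 'I_n := fun j i => 0 < A i j.

Definition union_edges (n B : nat) (A : nat -> 'M[R]_n) (k : nat) : rel 'I_n :=
  fun j i => [exists t : 'I_B, edge_of (A (k * B + t)%N) j i].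

Definition strongly_connected (n : nat) (e : rel 'I_n) : Prop :=
  forall i j : 'I_n, connect e i j.

Fixpoint traj (n : nat) (A : nat -> 'M[R]_n) (x0 : 'cV[R]_n) (k : nat) : 'cV[R]_n :=
  match k with
  | 0 => x0
  | k'.+1 => A k' *m traj A x0 k'
  end.

Definition avg (n : nat) (x : 'cV[R]_n) : R := (\sum_(i < n) x i 0) / n%:R.

Definition V (n : nat) (x : 'cV[R]_n) : R := \sum_(i < n) (x i 0 - avg x) ^+ 2.

From HB Require Import structures.
From mathcomp Require Import all_boot all_order all_algebra.
From mathcomp Require Import Rstruct.
From Stdlib Require Rdefinitions Rpower.
From mathcomp Require Import ring lra zify.
Import Order.TTheory GRing.Theory Num.Theory.
Local Open Scope ring_scope.

Set Implicit Arguments. Unset Strict Implicit. Unset Printing Implicit Defensive.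

(* Average along a cycle, M = (1 - eta) I + eta P with P the cyclic shift, but only
   once per window of B steps (the identity otherwise), so that after k steps M has
   acted k / B times.  M is normal, so by Cauchy-Schwarz the ratio |M y|^2 / |y|^2
   cannot decrease along the iteration; hence the variance after k steps is at least
   rho^(k / B) times the initial one, where rho = |M y|^2 / |y|^2 at the centred
   initial state y.  Since |M y|^2 = |y|^2 - eta (1 - eta) sum_i (y_(i+1) - y_i)^2,
   the tent profile y_i = min(i, n - i), with |y|^2 >= (n / 8)^3 and increments of
   size at most 1, gives 1 - rho = O(eta / n^2), and ln(1 / eps) <= 2 (k / B) (1 - rho). *)

Section InnerProduct.
Variable I : finType.
Implicit Types f g : I -> R.

Definition dot f g := \sum_i f i * g i.
Definition sqnorm f := dot f f.

Lemma eq_sqnorm f g : f =1 g -> sqnorm f = sqnorm g.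
Proof. by move=> fg; apply: eq_bigr => i _; rewrite fg. Qed.

Lemma sqnormE f : sqnorm f = \sum_i f i ^+ 2.
Proof. by apply: eq_bigr => i _; rewrite expr2. Qed.

Lemma sqnorm_ge0 f : 0 <= sqnorm f.
Proof. by rewrite sqnormE; apply: sumr_ge0 => i _; apply: sqr_ge0. Qed.

Lemma dot_sqr_le f g : 0 < sqnorm f -> dot f g ^+ 2 <= sqnorm f * sqnorm g.
Proof.
move=> f_gt0; rewrite -subr_ge0 -(pmulr_rge0 _ f_gt0).
have -> : sqnorm f * (sqnorm f * sqnorm g - dot f g ^+ 2) =
    \sum_i (sqnorm f * g i - dot f g * f i) ^+ 2.
  have -> : \sum_i (sqnorm f * g i - dot f g * f i) ^+ 2 =
      \sum_i (sqnorm f ^+ 2 * (g i * g i) - 2 * sqnorm f * dot f g * (f i * g i)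
               + dot f g ^+ 2 * (f i * f i)).
    by apply: eq_bigr => i _; ring.
  rewrite big_split sumrB -!mulr_sumr /=; rewrite -/(dot g g) -/(dot f g) -/(dot f f).
  rewrite /sqnorm; ring.
by rewrite -sqnormE sqnorm_ge0.
Qed.

Lemma sum_reindex_inj (s : I -> I) (F : I -> R) :
  injective s -> \sum_i F (s i) = \sum_i F i.
Proof. by move=> s_inj; rewrite [RHS](reindex_inj s_inj). Qed.

Lemma sqnorm_mix (s : I -> I) (a : R) f : injective s ->
  sqnorm (fun i => (1 - a) * f i + a * f (s i)) =
  sqnorm f - a * (1 - a) * \sum_i (f (s i) - f i) ^+ 2.
Proof.
move=> s_inj; rewrite !sqnormE.
have -> : \sum_i ((1 - a) * f i + a * f (s i)) ^+ 2 =
  \sum_i (f i ^+ 2 - a * (1 - a) * (f (s i) - f i) ^+ 2 + a * (f (s i) ^+ 2 - f i ^+ 2)).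
  by apply: eq_bigr => i _; ring.
rewrite big_split /= sumrB -!mulr_sumr [\sum_i (_ - _)]sumrB.
by rewrite (sum_reindex_inj (fun i => f i ^+ 2) s_inj) subrr mulr0 addr0.
Qed.

Section NormalOperator.
Variables S T : (I -> R) -> I -> R.
Hypothesis dot_adj : forall f g, dot (S f) g = dot f (T g).
Hypothesis sqnorm_adj : forall g, sqnorm (T g) = sqnorm (S g).

(* [|S f|^2 = <f, T S f> <= |f| |T S f| = |f| |S S f|] *)
Lemma sqnorm_ratio_mono rho f : 0 < sqnorm f ->
  rho * sqnorm f <= sqnorm (S f) -> rho * sqnorm (S f) <= sqnorm (S (S f)).
Proof.
move=> f_gt0 le_rho; rewrite -(ler_pM2l f_gt0).
have := dot_sqr_le (T (S f)) f_gt0.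
rewrite -dot_adj sqnorm_adj -/(sqnorm (S f)); apply: le_trans.
rewrite expr2 (mulrC (sqnorm f)) mulrAC; apply: ler_wpM2r => //; exact: sqnorm_ge0.
Qed.

Lemma sqnorm_iter_ge rho f m : 0 < rho -> 0 < sqnorm f ->
  rho * sqnorm f <= sqnorm (S f) -> rho ^+ m * sqnorm f <= sqnorm (iter m S f).
Proof.
move=> rho_gt0 f_gt0 le_rho.
suff : [/\ 0 < sqnorm (iter m S f),
    rho * sqnorm (iter m S f) <= sqnorm (S (iter m S f)) &
    rho ^+ m * sqnorm f <= sqnorm (iter m S f)] by case.
elim: m => [|m [gt0 le_m ge_m]]; first by rewrite expr0 mul1r.
split => /=.
- by apply: lt_le_trans le_m; rewrite mulr_gt0.
- exact: sqnorm_ratio_mono.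
- by rewrite exprS -mulrA (le_trans _ le_m) // ler_wpM2l // ltW.
Qed.

End NormalOperator.
End InnerProduct.

Section CyclicAveraging.
Variable n : nat.
Implicit Types f g : 'I_n -> R.

Definition cyc_avg (a : R) f i := (1 - a) * f i + a * f (ordS i).
Definition cyc_avg_adj (a : R) f i := (1 - a) * f i + a * f (ord_pred i).
Definition cyc_energy f := \sum_i (f (ordS i) - f i) ^+ 2.
Definition centered (x : 'cV[R]_n) i := x i 0 - avg x.

Lemma V_centered x : V x = sqnorm (centered x).
Proof. by rewrite sqnormE. Qed.

Lemma sum_cyc_avg a f : \sum_i cyc_avg a f i = \sum_i f i.
Proof.
rewrite big_split /= -!mulr_sumr (sum_reindex_inj f (@ordS_inj n)).
by rewrite -mulrDl subrK mul1r.
Qed.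

Lemma dot_cyc_avg a f g : dot (cyc_avg a f) g = dot f (cyc_avg_adj a g).
Proof.
rewrite /dot /cyc_avg /cyc_avg_adj.
under eq_bigr => i _ do rewrite mulrDl -!mulrA.
under [RHS]eq_bigr => i _ do rewrite mulrDr mulrCA [f i * (a * _)]mulrCA.
rewrite !big_split /= -!mulr_sumr; congr (_ + a * _).
rewrite -[RHS](sum_reindex_inj _ (@ordS_inj n)) /=.
by apply: eq_bigr => i _; rewrite ordSK.
Qed.

Lemma sqnorm_cyc_avg a f :
  sqnorm (cyc_avg a f) = sqnorm f - a * (1 - a) * cyc_energy f.
Proof. exact: sqnorm_mix (@ordS_inj n). Qed.

Lemma sqnorm_cyc_avg_adj a f : sqnorm (cyc_avg_adj a f) = sqnorm (cyc_avg a f).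
Proof.
rewrite sqnorm_cyc_avg /cyc_avg_adj (sqnorm_mix _ _ (@ord_pred_inj n)); congr (_ - _ * _).
rewrite -(sum_reindex_inj _ (@ordS_inj n)) /=.
by apply: eq_bigr => i _; rewrite ordSK -sqrrN opprB.
Qed.

Definition cyc_mx (a : R) : 'M[R]_n :=
  \matrix_(i, j) ((1 - a) * (i == j)%:R + a * (ordS i == j)%:R).

Lemma sum_eq_delta (i : 'I_n) (F : 'I_n -> R) : \sum_j (i == j)%:R * F j = F i.
Proof.
by rewrite (bigD1 i) //= eqxx mul1r big1 ?addr0 // => j /negbTE; rewrite eq_sym => ->; rewrite mul0r.
Qed.

Lemma cyc_mx_mulE a (x : 'cV[R]_n) i :
  (cyc_mx a *m x) i 0 = cyc_avg a (fun j => x j 0) i.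
Proof.
rewrite mxE; under eq_bigr => j _ do rewrite mxE mulrDl -!mulrA.
by rewrite big_split /= -!mulr_sumr !sum_eq_delta.
Qed.

Lemma cyc_mx_doubly_stochastic a : 0 <= a <= 1 -> doubly_stochastic (cyc_mx a).
Proof.
move=> /andP[a_ge0 a_le1].
have sum_eq1 (j : 'I_n) : \sum_i (i == j)%:R = 1 :> R.
  by rewrite -[RHS](sum_eq_delta j (fun=> 1)); apply: eq_bigr => i _; rewrite eq_sym mulr1.
split; [|split] => [i j|i|j].
- by rewrite mxE addr_ge0 // mulr_ge0 ?ler0n // subr_ge0.
- under eq_bigr => j _ do rewrite mxE -[_ * _%:R]mulrC -[a * _]mulrC.
  by rewrite big_split /= !sum_eq_delta subrK.
- under eq_bigr => i _ do rewrite mxE.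
  rewrite big_split /= -!mulr_sumr sum_eq1.
  by rewrite (sum_reindex_inj (fun i => (i == j)%:R) (@ordS_inj n)) sum_eq1 !mulr1 subrK.
Qed.

Lemma cyc_mx_diag_gt0 a i : 0 <= a < 1 -> 0 < cyc_mx a i i.
Proof.
move=> /andP[a_ge0 a_lt1]; rewrite mxE eqxx mulr1.
by apply: ltr_wpDr; [rewrite mulr_ge0 ?ler0n | rewrite subr_gt0].
Qed.

Lemma cyc_mx_support_ge a i j : 0 <= a <= 1 / 2 -> 0 < cyc_mx a i j -> a <= cyc_mx a i j.
Proof.
move=> /andP[a_ge0 a_le]; rewrite mxE.
by case: (i == j); case: (ordS i == j); rewrite /= ?mulr1 ?mulr0; lra.
Qed.

Lemma cyc_mx_shift_gt0 a i : 0 < a <= 1 -> 0 < cyc_mx a i (ordS i).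
Proof.
move=> /andP[a_gt0 a_le1]; rewrite mxE eqxx mulr1.
by apply: ltr_wpDl => //; rewrite mulr_ge0 ?ler0n ?subr_ge0.
Qed.

Lemma avg_cyc_mx a (x : 'cV[R]_n) : avg (cyc_mx a *m x) = avg x.
Proof.
by rewrite /avg; under eq_bigr => i _ do rewrite cyc_mx_mulE; rewrite sum_cyc_avg.
Qed.

Lemma V_iter_cyc_mx a (x : 'cV[R]_n) m :
  V (iter m (mulmx (cyc_mx a)) x) = sqnorm (iter m (cyc_avg a) (centered x)).
Proof.
have avg_iter : avg (iter m (mulmx (cyc_mx a)) x) = avg x.
  by elim: m => //= m IH; rewrite avg_cyc_mx.
have centered_iter i :
    iter m (mulmx (cyc_mx a)) x i 0 - avg x = iter m (cyc_avg a) (centered x) i.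
  elim: m i {avg_iter} => //= m IH i.
  by rewrite cyc_mx_mulE /cyc_avg -!IH; ring.
rewrite /V avg_iter sqnormE; apply: eq_bigr => i _; by rewrite centered_iter.
Qed.

Lemma V_iter_cyc_mx_ge a (x : 'cV[R]_n) m : 0 < V x ->
  0 < 1 - a * (1 - a) * cyc_energy (centered x) / V x ->
  (1 - a * (1 - a) * cyc_energy (centered x) / V x) ^+ m * V x
    <= V (iter m (mulmx (cyc_mx a)) x).
Proof.
rewrite V_iter_cyc_mx V_centered => Vx_gt0 rho_gt0.
apply: (sqnorm_iter_ge (dot_cyc_avg a) (sqnorm_cyc_avg_adj a)) => //.
by rewrite mulrBl mul1r divfK ?gt_eqF // sqnorm_cyc_avg.
Qed.

Lemma strongly_connected_cycle (e : rel 'I_n) :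
  (forall i, e (ordS i) i) -> strongly_connected e.
Proof.
move=> e_pred x y.
have connect_iter k : connect e (iter k (@ordS n) y) y.
  elim: k => [|k IH] /=; first exact: connect0.
  by apply: connect_trans IH; apply: connect1.
have val_iter k : val (iter k (@ordS n) y) = ((y + k) %% n)%N.
  elim: k => [|k IH] /=; first by rewrite addn0 modn_small.
  by rewrite IH addnS -[((y + k) %% n).+1]addn1 -[(y + k).+1]addn1 modnDml.
suff -> : x = iter (x + n - y) (@ordS n) y by [].
apply: val_inj; rewrite val_iter.
have -> : (y + (x + n - y) = x + n)%N by have := ltn_ord y; lia.
by rewrite modnDr modn_small.
Qed.

End CyclicAveraging.

Arguments cyc_mx {n} a.

Section SparseSchedule.
Variables (n B : nat) (M : 'M[R]_n).
Hypothesis B_gt0 : (0 < B)%N.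

Definition sparse_schedule (k : nat) : 'M[R]_n := if (B %| k.+1)%N then M else 1%:M.

Lemma traj_sparse_schedule x0 k :
  traj sparse_schedule x0 k = iter (k %/ B) (mulmx M) x0.
Proof.
elim: k => [|k /= ->]; first by rewrite div0n.
rewrite /sparse_schedule divnS //.
by case: (B %| k.+1)%N; rewrite ?mul1mx.
Qed.

Lemma union_edges_sparse_schedule k i j :
  edge_of M i j -> union_edges B sparse_schedule k i j.
Proof.
move=> Mij; have lt_pred : (B.-1 < B)%N by lia.
apply/existsP; exists (Ordinal lt_pred).
by rewrite /edge_of /sparse_schedule /= -addnS prednK // -mulSnr dvdn_mull.
Qed.

End SparseSchedule.

Lemma doubly_stochastic1 n : doubly_stochastic (1%:M : 'M[R]_n).
Proof.
split; [|split] => [i j|i|j]; first by rewrite mxE ler0n.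
- by rewrite (bigD1 i) //= mxE eqxx big1 ?addr0 // => j /negbTE ji; rewrite mxE eq_sym ji.
- by rewrite (bigD1 j) //= mxE eqxx big1 ?addr0 // => i /negbTE ij; rewrite mxE ij.
Qed.

Definition tent n (i : 'I_n) : R := (minn i (n - i))%:R.

Lemma sqr_natB_le1 (u v : nat) : (u <= v.+1)%N -> (v <= u.+1)%N -> (u%:R - v%:R : R) ^+ 2 <= 1.
Proof.
move=> le_uv le_vu.
have [->|[->|->]] : u = v.+1 \/ u = v \/ v = u.+1 by lia.
- by rewrite -addn1 natrD; lra.
- by rewrite subrr expr0n ler01.
- by rewrite -addn1 natrD; lra.
Qed.

Lemma cyc_energy_tent n : cyc_energy (@tent n) <= n%:R.
Proof.
rewrite -[n in X in _ <= X]card_ord -sumr_const; apply: ler_sum => i _.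
have lt_in := ltn_ord i; rewrite /tent /=.
have [lt_Sn|le_nS] := ltnP i.+1 n.
  by rewrite modn_small //; apply: sqr_natB_le1; lia.
have -> : i.+1 = n by lia.
by rewrite modnn; apply: sqr_natB_le1; lia.
Qed.

Lemma sum_nat_range_ge (F : nat -> R) n l h b : (l <= h <= n)%N ->
  (forall i, 0 <= F i) -> (forall i, (l <= i < h)%N -> b <= F i) ->
  b *+ (h - l) <= \sum_(0 <= i < n) F i.
Proof.
move=> /andP[le_lh le_hn] F_ge0 F_ge.
rewrite (@big_cat_nat _ _ _ l 0 n) ?(leq_trans le_lh) // (@big_cat_nat _ _ _ h l n) //=.
have : 0 <= \sum_(0 <= i < l) F i by apply: sumr_ge0.
have : 0 <= \sum_(h <= i < n) F i by apply: sumr_ge0.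
have : b *+ (h - l) <= \sum_(l <= i < h) F i.
  by rewrite -sumr_const_nat; apply: ler_sum_nat.
lra.
Qed.

(* Any constant [c] is at distance at least [q = n / 8] from [tent] on [q] points:
   on [[0, q)] if [2 q < c], on [[3 q, 4 q)] otherwise. *)
Lemma sqnorm_tent_subr_ge n (c : R) : (16 <= n)%N ->
  (n %/ 8)%:R ^+ 3 <= sqnorm (fun i => @tent n i - c).
Proof.
move=> n_ge16; set q := (n %/ 8)%N.
have le_8q_n : (q * 8 <= n)%N by apply: leq_divM.
rewrite sqnormE /tent -(big_mkord xpredT (fun i => ((minn i (n - i))%:R - c) ^+ 2)).
have F_ge0 i : 0 <= ((minn i (n - i))%:R - c) ^+ 2 :> R by apply: sqr_ge0.
have -> : q%:R ^+ 3 = q%:R ^+ 2 *+ q :> R by rewrite -mulr_natr; ring.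
have q_ge0 : 0 <= q%:R :> R by rewrite ler0n.
have [c_le|c_gt] := lerP c (2 * q%:R).
- have -> : q = (4 * q - 3 * q)%N by lia.
  apply: sum_nat_range_ge => [|//|i /andP[le_3q lt_4q]]; first lia.
  have -> : minn i (n - i) = i by lia.
  have : 3 * q%:R <= i%:R :> R by rewrite -natrM ler_nat.
  have -> : (4 * q - 3 * q)%N = q by lia.
  nra.
- rewrite -[X in _ *+ X]subn0; apply: sum_nat_range_ge => [|//|i /andP[_ lt_iq]]; first lia.
  have -> : minn i (n - i) = i by lia.
  have : i%:R <= q%:R :> R by rewrite ler_nat ltnW.
  have : 0 <= i%:R :> R by rewrite ler0n.
  nra.
Qed.

Lemma ln_le (x y : R) : 0 < x -> x <= y -> Rpower.ln x <= Rpower.ln y.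
Proof.
move=> x_gt0 le_xy; rewrite leNgt; apply/negP => /RltP lt_ln.
have /RltP y_gt0 := lt_le_trans x_gt0 le_xy.
have /RltP := Rpower.ln_lt_inv y x y_gt0 (elimT RltP x_gt0) lt_ln.
lra.
Qed.

Lemma ln_inv_le_pow (rho eps : R) m : 0 < rho -> 0 < eps -> rho ^+ m <= eps ->
  Rpower.ln (1 / eps) <= m%:R * Rpower.ln (1 / rho).
Proof.
move=> rho_gt0 eps_gt0 le_eps.
have rhom_gt0 : 0 < rho ^+ m by apply: exprn_gt0.
have -> : m%:R * Rpower.ln (1 / rho) = Rpower.ln (1 / rho ^+ m).
  rewrite !div1r -exprVn -INRE -RpowE Rpower.ln_pow ?RmultE //.
  by apply/RltP; rewrite invr_gt0.
by apply: ln_le; rewrite ?div1r ?invr_gt0 // lef_pV2 ?posrE.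
Qed.

(* From [ln x <= x - 1] at [x = 1 / rho]. *)
Lemma ln_inv_le (rho : R) : 1 / 2 <= rho <= 1 -> Rpower.ln (1 / rho) <= 2 * (1 - rho).
Proof.
move=> /andP[rho_ge rho_le1]; have rho_gt0 : 0 < rho by lra.
have inv_gt0 : 0 < 1 / rho by rewrite divr_gt0.
apply: (@le_trans _ _ (1 / rho - 1)).
  have := Rpower.exp_ineq1_le (Rpower.ln (1 / rho)).
  by rewrite Rpower.exp_ln; [move/RleP; rewrite RplusE R1E; lra | apply/RltP].
rewrite -subr_ge0.
have -> : 2 * (1 - rho) - (1 / rho - 1) = (1 - rho) * (2 * rho - 1) / rho.
  by field; apply/eqP; lra.
by apply: divr_ge0; [apply: mulr_ge0|]; lra.
Qed.

Lemma energy_gap_le (eta N D n q : R) :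
  0 < eta <= 1 / 2 -> 6 <= q -> 0 <= n <= 16 * q -> q ^+ 3 <= N -> 0 <= D <= n ->
  let w := eta * (1 - eta) * D / N in 0 <= w <= 1 / 2 /\ n ^+ 2 * w <= 4096 * eta.
Proof.
move=> /andP[eta_gt0 eta_le] q_ge6 /andP[n_ge0 n_le] q3_le /andP[D_ge0 D_le] w.
have q3_gt0 : 0 < q ^+ 3 by rewrite exprn_gt0 //; lra.
have N_gt0 : 0 < N := lt_le_trans q3_gt0 q3_le.
have w_ge0 : 0 <= w by rewrite divr_ge0 ?(ltW N_gt0) // !mulr_ge0 //; lra.
have w_q3 : w * q ^+ 3 <= eta * n.
  apply: (@le_trans _ _ (w * N)); first exact: ler_wpM2l.
  rewrite /w divfK ?gt_eqF //; apply: (@le_trans _ _ (eta * D)); last by apply: ler_wpM2l; [exact: ltW|].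
  by rewrite -mulrA ler_wpM2l ?ler_piMl //; lra.
have q2_ge : 36 <= q ^+ 2 by nra.
split; first (apply/andP; split => //).
- have : w * q ^+ 3 <= 8 * q by apply: (le_trans w_q3); nra.
  rewrite exprSr mulrA; nra.
- have : n ^+ 3 <= 4096 * q ^+ 3.
    rewrite (_ : 4096 * q ^+ 3 = (16 * q) ^+ 3); last by ring.
    by apply: lerXn2r; rewrite ?nnegrE //; lra.
  nra.
Qed.

Section Construction.
Variables (n B : nat) (eta : R).

Let A := sparse_schedule B (@cyc_mx n eta).
Let x0 := \col_(i < n) tent i.

Lemma V_tent_ge : (16 <= n)%N -> (n %/ 8)%:R ^+ 3 <= V x0.
Proof.
move=> n_ge; rewrite V_centered (@eq_sqnorm _ _ (fun i => tent i - avg x0)).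
  exact: sqnorm_tent_subr_ge.
by move=> i; rewrite /centered mxE.
Qed.

Lemma cyc_energy_centered_tent : cyc_energy (centered x0) <= n%:R.
Proof.
suff -> : cyc_energy (centered x0) = cyc_energy (@tent n) by exact: cyc_energy_tent.
by apply: eq_bigr => i _; rewrite /centered !mxE; congr (_ ^+ 2); ring.
Qed.

Lemma sparse_cyc_schedule_spec : (0 < B)%N -> 0 < eta -> eta <= 1 / 2 ->
  [/\ forall k, doubly_stochastic (A k),
      forall k i, 0 < A k i i,
      forall k i j, 0 < A k i j -> eta <= A k i j &
      forall k, strongly_connected (union_edges B A k)].
Proof.
move=> B_gt0 eta_gt0 eta_le; split=> [k|k i|k i j|k]; rewrite /A /sparse_schedule.
- case: ifP => _; last exact: doubly_stochastic1.
  by apply: cyc_mx_doubly_stochastic; apply/andP; split; lra.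
- case: ifP => _; last by rewrite mxE eqxx ltr01.
  by apply: cyc_mx_diag_gt0; apply/andP; split; lra.
- case: ifP => _; first by apply: cyc_mx_support_ge; apply/andP; split; lra.
  by rewrite mxE; case: (i == j) => /=; lra.
- apply: strongly_connected_cycle => i; apply: union_edges_sparse_schedule => //.
  by apply: cyc_mx_shift_gt0; apply/andP; split; lra.
Qed.

Lemma tent_variance_decay : 0 < eta -> eta <= 1 / 2 -> (48 <= n)%N ->
  exists w, [/\ 0 <= w <= 1 / 2, n%:R ^+ 2 * w <= 4096 * eta, 0 < V x0 &
    forall m, (1 - w) ^+ m * V x0 <= V (iter m (mulmx (cyc_mx eta)) x0)].
Proof.
move=> eta_gt0 eta_le n_ge; set q := (n %/ 8)%N.
have q_ge6 : 6 <= q%:R :> R by rewrite (ler_nat R 6); lia.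
have n_le : (0 <= n%:R :> R) && (n%:R <= 16 * q%:R :> R).
  apply/andP; split; first exact: ler0n.
  have : (n <= 16 * q)%N by lia.
  by rewrite -(ler_nat R) natrM.
have Vx0_ge : q%:R ^+ 3 <= V x0 by apply: V_tent_ge; lia.
have D_bnd : (0 <= cyc_energy (centered x0)) && (cyc_energy (centered x0) <= n%:R).
  by rewrite cyc_energy_centered_tent andbT; apply: sumr_ge0 => i _; apply: sqr_ge0.
have eta_bnd : 0 < eta <= 1 / 2 by apply/andP.
have [w_bnd gap] := energy_gap_le eta_bnd q_ge6 n_le Vx0_ge D_bnd.
have Vx0_gt0 : 0 < V x0 by apply: lt_le_trans Vx0_ge; rewrite exprn_gt0 //; lra.
exists (eta * (1 - eta) * cyc_energy (centered x0) / V x0); split=> // m.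
by apply: V_iter_cyc_mx_ge => //; move: w_bnd => /andP[]; lra.
Qed.

End Construction.

Lemma mixing_time_ge (n2 eta w L : R) (B m k : nat) :
  0 <= n2 -> 0 < eta -> n2 * w <= 4096 * eta -> L <= m%:R * (2 * w) -> (m * B <= k)%N ->
  1 / 8192 * (n2 / eta) * B%:R * L <= k%:R.
Proof.
move=> n2_ge0 eta_gt0 w_le L_le mB_le.
have C_ge0 : 0 <= 1 / 8192 * (n2 / eta) * B%:R.
  by rewrite !mulr_ge0 ?ler0n ?divr_ge0 ?invr_ge0 ?ler0n ?(ltW eta_gt0).
apply: le_trans (ler_wpM2l C_ge0 L_le) _.
have -> : 1 / 8192 * (n2 / eta) * B%:R * (m%:R * (2 * w)) =
    (B%:R * m%:R / (4096 * eta)) * (n2 * w) by field; rewrite gt_eqF.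
have coef_ge0 : 0 <= B%:R * m%:R / (4096 * eta) by rewrite divr_ge0 ?mulr_ge0 ?ler0n // ltW.
apply: le_trans (ler_wpM2l coef_ge0 w_le) _.
by rewrite divfK ?mulf_neq0 ?gt_eqF // mulrC -natrM ler_nat.
Qed.

Theorem proposition2 :
  exists (c : R) (n0 : nat), 0 < c /\
  forall (n B : nat) (eta eps : R),
    (n0 <= n)%N -> (1 <= B)%N ->
    0 < eta -> eta < 1 / 2 -> 0 < eps -> eps < 1 ->
    exists (A : nat -> 'M[R]_n) (x0 : 'cV[R]_n),
      (forall k, doubly_stochastic (A k)) /\
      (forall k i, 0 < A k i i) /\
      (forall k i j, 0 < A k i j -> eta <= A k i j) /\
      (forall k, strongly_connected (union_edges B A k)) /\
      (forall k : nat, V (traj A x0 k) / V x0 <= eps ->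
         c * (n%:R ^+ 2 / eta) * B%:R * Rpower.ln (1 / eps) <= k%:R).
Proof.
exists (1 / 8192), 48%N; split; first lra.
move=> n B eta eps n_ge B_gt0 eta_gt0 eta_lt eps_gt0 _.
have eta_le : eta <= 1 / 2 by lra.
exists (sparse_schedule B (cyc_mx eta)), (\col_(i < n) tent i).
have [ds diag supp conn] := sparse_cyc_schedule_spec n B_gt0 eta_gt0 eta_le.
do 4!split=> //; move=> k; rewrite traj_sparse_schedule // => ratio_le.
have [w [/andP[w_ge0 w_le] gap Vx0_gt0 decay]] := tent_variance_decay eta_gt0 eta_le n_ge.
have pow_le : (1 - w) ^+ (k %/ B) <= eps.
  by rewrite -(ler_pM2r Vx0_gt0) (le_trans (decay _)) // -ler_pdivrMr.
apply: mixing_time_ge (sqr_ge0 _) eta_gt0 gap _ (leq_divM k B).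
apply: le_trans (ln_inv_le_pow _ eps_gt0 pow_le) _; first lra.
apply: ler_wpM2l; first exact: ler0n.
by rewrite -{2}(subKr 1 w); apply: ln_inv_le; apply/andP; lra.
Qed.
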